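(* Let $\mathcal C$ and $\mathcal D$ be $\Bbbk$-linear categories, let $F:\mathcal C\to\mathcal D$ be a fully faithful ($\Bbbk$-linear) functor, and let $\sigma_{\mathcal C}$ and $\sigma_{\mathcal D}$ be ($\Bbbk$-linear) endofunctors of $\mathcal C$ and $\mathcal D$ respectively. Suppose that $F\circ\sigma_{\mathcal C}$ is naturally isomorphic to $\sigma_{\mathcal D}\circ F$. Then $\mathrm{FP}(u,t,\sigma_{\mathcal C})\le \mathrm{FP}(u,t,\sigma_{\mathcal D})$ coefficientwise, i.e. $\mathrm{fpdim}^n(\sigma_{\mathcal C}^m)\le \mathrm{fpdim}^n(\sigma_{\mathcal D}^m)$ for all $n\ge 1$ and $m\ge 0$.
   Context: $\Bbbk$ is an algebraically closed field. For objects $X,Y$ write $\dim(X,Y)=\dim_\Bbbk\mathrm{Hom}(X,Y)\in\mathbb{Z}_{\ge0}\cup\{\infty\}$. Spectral radius: for a square matrix $A$ with entries in $\mathbb R\cup\{\pm\infty\}$, let $A'$ be obtained by replacing each entry $\infty$ (resp. $-\infty$) in position $(i,j)$ by a real variable $x_{ij}$ (resp. $-x_{ij}$), and set $\rho(A)=\liminf_{\text{all }x_{ij}\to\infty}\rho(A')$, where for a real matrix $\rho$ is the maximum of the absolute values of its eigenvalues. A brick is an object $M$ with $\mathrm{Hom}(M,M)=\Bbbk$. A brick set of size $n$ is a set $\phi=\{X_1,\dots,X_n\}$ of nonzero bricks with $\dim(X_i,X_j)=\delta_{ij}$ for all $i,j$; $\Phi_{n,b}$ denotes the set of brick sets of size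 $n$. For an endofunctor $\sigma$, the adjacency matrix is $A(\phi,\sigma)=(\dim(X_i,\sigma(X_j)))_{n\times n}$, and $\mathrm{fpdim}^n(\sigma)=\sup_{\phi\in\Phi_{n,b}}\rho(A(\phi,\sigma))$ (defined as $0$ if $\Phi_{n,b}=\emptyset$). The Frobenius–Perron series is $\mathrm{FP}(u,t,\sigma)=\sum_{m\ge0}\sum_{n\ge1}\mathrm{fpdim}^n(\sigma^m)t^mu^n$, and for two such series $f\le g$ means every coefficient of $f$ is at most the corresponding coefficient of $g$ (coefficients in $\mathbb R_{\ge0}\cup\{\infty\}$). *)

From HB Require Import structures.
From mathcomp Require Import all_boot all_order all_algebra.
From mathcomp Require Import all_classical all_reals.
From mathcomp Require Import ereal.
From mathcomp Require Import complex.

Set Implicit Arguments.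
Unset Strict Implicit.
Unset Printing Implicit Defensive.

Import Order.TTheory GRing.Theory Num.Theory.
Local Open Scope ring_scope.
Local Open Scope classical_set_scope.

Record kcat (K : fieldType) := KCat {
  obj : Type;
  hom : obj -> obj -> lmodType K;
  comp : forall X Y Z : obj, hom Y Z -> hom X Y -> hom X Z;
  idm : forall X : obj, hom X X;
  comp_linr : forall X Y Z (g : hom Y Z) (a : K) (f1 f2 : hom X Y),
      comp g (a *: f1 + f2) = a *: comp g f1 + comp g f2;
  comp_linl : forall X Y Z (f : hom X Y) (a : K) (g1 g2 : hom Y Z),
      comp (a *: g1 + g2) f = a *: comp g1 f + comp g2 f;
  compA : forall X Y Z W (h : hom Z W) (g : hom Y Z) (f : hom X Y),
      comp h (comp g f) = comp (comp h g) f;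
  comp_idl : forall X Y (f : hom X Y), comp (idm Y) f = f;
  comp_idr : forall X Y (f : hom X Y), comp f (idm X) = f
}.

Arguments comp {K} _ {X Y Z}.
Arguments idm {K} _ X.

Record kfunctor (K : fieldType) (C D : kcat K) := KFunctor {
  fobj : obj C -> obj D;
  fmap : forall X Y : obj C, hom X Y -> hom (fobj X) (fobj Y);
  fmap_lin : forall X Y (a : K) (f g : hom X Y),
      fmap (a *: f + g) = a *: fmap f + fmap g;
  fmap_comp : forall X Y Z (g : hom Y Z) (f : hom X Y),
      fmap (comp C g f) = comp D (fmap g) (fmap f);
  fmap_id : forall X, fmap (idm C X) = idm D (fobj X)
}.

Arguments fobj {K C D} _ _.
Arguments fmap {K C D} _ {X Y}.

Definition fully_faithful (K : fieldType) (C D : kcat K) (F : kfunctor C D) :=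
  forall X Y : obj C, bijective (@fmap _ _ _ F X Y).

Definition nat_iso_commute (K : fieldType) (C D : kcat K) (F : kfunctor C D)
    (sC : kfunctor C C) (sD : kfunctor D D) :=
  exists eta : forall X : obj C, hom (fobj F (fobj sC X)) (fobj sD (fobj F X)),
    (forall (X Y : obj C) (f : hom X Y),
        comp D (eta Y) (fmap F (fmap sC f)) = comp D (fmap sD (fmap F f)) (eta X))
    /\ (forall X : obj C, exists theta : hom (fobj sD (fobj F X)) (fobj F (fobj sC X)),
          comp D theta (eta X) = idm D _ /\ comp D (eta X) theta = idm D _).

Definition fpow_obj (K : fieldType) (C : kcat K) (s : kfunctor C C) (m : nat)
  : obj C -> obj C := iter m (fobj s).

Definition lin_indep (K : fieldType) (V : lmodType K) (s : seq V) :=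
  forall c : 'I_(size s) -> K,
    \sum_(i < size s) c i *: s`_i = 0 -> forall i, c i = 0.

Definition vdim (R : realType) (K : fieldType) (V : lmodType K) : \bar R :=
  ereal_sup [set ((size s)%:R)%:E | s in [set s : seq V | lin_indep s]].

Definition hdim (R : realType) (K : fieldType) (C : kcat K) (X Y : obj C)
  : \bar R := vdim R (hom X Y).

Definition spec_rad (R : realType) (n : nat) (A : 'M[R]_n) : \bar R :=
  ereal_sup [set (ComplexField.Normc.normc z)%:E |
     z in [set z : R[i] | root (char_poly (map_mx (fun r : R => (r%:C)%C) A)) z]].

Definition subst_inf (R : realType) (n : nat) (A : 'M[\bar R]_n)
    (x : 'I_n -> 'I_n -> R) : 'M[R]_n :=
  \matrix_(i, j) match A i j with
                 | EFin r => r
                 | +oo%E => x i j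
                 | -oo%E => - x i j
                 end.

(* liminf as all the variables x_ij tend to +oo *)
Definition spec_rad_ext (R : realType) (n : nat) (A : 'M[\bar R]_n) : \bar R :=
  ereal_sup [set ereal_inf [set spec_rad (subst_inf A x) |
                            x in [set x | forall i j, M <= x i j]] | M in [set: R]].

Definition brick_set (R : realType) (K : fieldType) (C : kcat K) (n : nat)
    (X : 'I_n -> obj C) :=
  forall i j, hdim R (X i) (X j) = (if i == j then 1 else 0)%:R%:E.

Definition adj_mx (R : realType) (K : fieldType) (C : kcat K) (n : nat)
    (X : 'I_n -> obj C) (s : obj C -> obj C) : 'M[\bar R]_n :=
  \matrix_(i, j) hdim R (X i) (s (X j)).

(* fpdim^n of an endofunctor, given through its object map s *)
Definition fpdim (R : realType) (K : fieldType) (C : kcat K) (n : nat)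
    (s : obj C -> obj C) : \bar R :=
  if `[< exists X : 'I_n -> obj C, brick_set R X >]
  then ereal_sup [set spec_rad_ext (adj_mx R X s) | X in [set X : 'I_n -> obj C | brick_set R X]]
  else 0%E.

(* A fully faithful F preserves Hom dimensions, so it sends brick sets of C
   to brick sets of D; the natural isomorphism F sC^m = sD^m F (iterated from
   F sC = sD F) identifies dim(X_i, sC^m X_j) with dim(F X_i, sD^m (F X_j)),
   so every adjacency matrix of sC^m is one of sD^m and the supremum over C
   is at most the one over D.  When C has no brick set of size n its fpdim is
   0, below any spectral radius because the complex characteristic polynomial
   of an n x n matrix, n >= 1, has a root. *)
From HB Require Import structures.
From mathcomp Require Import all_boot all_order all_algebra.
From mathcomp Require Import all_classical all_reals.
From mathcomp Require Import ereal complex.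

Set Implicit Arguments.
Unset Strict Implicit.
Unset Printing Implicit Defensive.
Import Order.TTheory GRing.Theory Num.Theory.
Local Open Scope ring_scope.
Local Open Scope classical_set_scope.

Section Dimension.
Variables (R : realType) (K : fieldType).

Lemma lin_indepP (V : lmodType K) (s : seq V) : lin_indep s <->
  (forall c : nat -> K, \sum_(i < size s) c i *: s`_i = 0 ->
     forall i, (i < size s)%N -> c i = 0).
Proof.
split=> [h c hc i hi | h c hc i].
  exact: (h (fun j => c (val j)) hc (Ordinal hi)).
pose c' n := oapp c 0 (insub n : option 'I_(size s)).
have c'E j : c' (val j) = c j by rewrite /c' valK.
rewrite -c'E; apply: h (ltn_ord i).
by rewrite -[RHS]hc; apply: eq_bigr => j _; rewrite c'E.
Qed.

Lemma vdim_le_inj (V W : lmodType K) (f : V -> W) :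
  (forall a x y, f (a *: x + y) = a *: f x + f y) -> injective f ->
  (vdim R V <= vdim R W)%E.
Proof.
move=> f_lin f_inj.
have f0 : f 0 = 0 by have := f_lin (-1) 0 0; rewrite scaler0 addr0 scaleN1r addNr.
have fD x y : f (x + y) = f x + f y by rewrite -[x]scale1r f_lin !scale1r.
have fZ a x : f (a *: x) = a *: f x by rewrite -[a *: x]addr0 f_lin f0 addr0.
apply: ge_ereal_sup => _ [s /lin_indepP s_indep <-].
apply: ereal_sup_ubound; exists (map f s); last by rewrite size_map.
apply/lin_indepP; rewrite size_map => c hc i hi.
apply: s_indep hi; apply: f_inj; rewrite f0 -hc (big_morph f fD f0).
by apply: eq_bigr => j _; rewrite fZ (nth_map 0).
Qed.

Definition kiso (D : kcat K) (P Q : obj D) :=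
  exists (u : hom P Q) (v : hom Q P), comp D v u = idm D P /\ comp D u v = idm D Q.

Lemma kiso_refl (D : kcat K) (P : obj D) : kiso P P.
Proof. by exists (idm D P), (idm D P); rewrite comp_idl. Qed.

Lemma kiso_trans (D : kcat K) (P Q S : obj D) : kiso P Q -> kiso Q S -> kiso P S.
Proof.
move=> [u [v [vu uv]]] [u' [v' [vu' uv']]].
exists (comp D u' u), (comp D v v'); split.
  by rewrite compA -(compA v) vu' comp_idr.
by rewrite compA -(compA u') uv comp_idr.
Qed.

Lemma kiso_fobj (D E : kcat K) (G : kfunctor D E) (P Q : obj D) :
  kiso P Q -> kiso (fobj G P) (fobj G Q).
Proof.
move=> [u [v [vu uv]]]; exists (fmap G u), (fmap G v).
by rewrite -!fmap_comp vu uv !fmap_id.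
Qed.

Lemma hdim_kisor (D : kcat K) (A P Q : obj D) :
  kiso P Q -> hdim R A P = hdim R A Q.
Proof.
move=> [u [v [vu uv]]]; apply/le_anti/andP; split.
  apply: (@vdim_le_inj _ _ (comp D u)) => [a x y|x y]; first by rewrite comp_linr.
  by move/(congr1 (comp D v)); rewrite !compA vu !comp_idl.
apply: (@vdim_le_inj _ _ (comp D v)) => [a x y|x y]; first by rewrite comp_linr.
by move/(congr1 (comp D u)); rewrite !compA uv !comp_idl.
Qed.

Lemma hdim_fully_faithful (C D : kcat K) (F : kfunctor C D) :
  fully_faithful F -> forall X Y : obj C, hdim R (fobj F X) (fobj F Y) = hdim R X Y.
Proof.
move=> F_ff X Y; have [g fmapK gK] := F_ff X Y.
apply/le_anti/andP; split.
  apply: (@vdim_le_inj _ _ g); last exact: can_inj gK.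
  by move=> a x y; apply: (can_inj fmapK); rewrite gK fmap_lin !gK.
apply: (@vdim_le_inj _ _ (fmap F)); last exact: can_inj fmapK.
by move=> a x y; rewrite fmap_lin.
Qed.

Lemma kiso_fpow_obj (C D : kcat K) (F : kfunctor C D) (sC : kfunctor C C)
    (sD : kfunctor D D) : nat_iso_commute F sC sD ->
  forall m X, kiso (fobj F (fpow_obj sC m X)) (fpow_obj sD m (fobj F X)).
Proof.
move=> [eta [_ eta_iso]]; elim=> [|m IHm] X; first exact: kiso_refl.
rewrite /fpow_obj !iterS; apply: kiso_trans (kiso_fobj sD (IHm X)).
by have [theta [h1 h2]] := eta_iso (iter m (fobj sC) X); exists (eta _), theta.
Qed.

End Dimension.

Section FrobeniusPerron.
Variable R : realType.

Lemma spec_rad_ge0 (n : nat) (A : 'M[R]_n) : (0 < n)%N -> (0 <= spec_rad A)%E.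
Proof.
move=> n_gt0; have : size (char_poly (map_mx (fun r : R => (r%:C)%C) A)) != 1%N.
  by rewrite size_char_poly; case: n n_gt0 {A}.
move=> /closed_rootP [z z_root].
apply: le_trans (ereal_sup_ubound _); last by exists z.
by rewrite lee_fin; case: z {z_root} => a b /=; exact: sqrtr_ge0.
Qed.

Lemma spec_rad_ext_ge0 (n : nat) (A : 'M[\bar R]_n) : (0 < n)%N ->
  (0 <= spec_rad_ext A)%E.
Proof.
move=> n_gt0; apply: le_trans (ereal_sup_ubound _); last by exists 0.
by apply: le_ereal_inf_tmp => _ [x _ <-]; exact: spec_rad_ge0.
Qed.

Lemma fpdim_le (K : fieldType) (C D : kcat K) (n : nat)
    (s : obj C -> obj C) (t : obj D -> obj D) (G : obj C -> obj D) :
  (0 < n)%N ->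
  (forall X : 'I_n -> obj C, brick_set R X -> brick_set R (G \o X)) ->
  (forall X : 'I_n -> obj C, brick_set R X -> adj_mx R X s = adj_mx R (G \o X) t) ->
  (fpdim R n s <= fpdim R n t)%E.
Proof.
move=> n_gt0 G_brick G_adj; rewrite /fpdim.
case: (asboolP (exists X : 'I_n -> obj C, brick_set R X)) => [[X0 X0_brick]|noC].
  rewrite asboolT; last by exists (G \o X0); exact: G_brick.
  apply: ge_ereal_sup => _ [X X_brick <-].
  by apply: ereal_sup_ubound; exists (G \o X); [exact: G_brick | rewrite G_adj].
case: asboolP => [[Y Y_brick]|//].
apply: le_trans (ereal_sup_ubound _); last by exists Y.
exact: spec_rad_ext_ge0.
Qed.

End FrobeniusPerron.

Theorem theorem0p1 (R : realType) (K : closedFieldType) (C D : kcat K)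
    (F : kfunctor C D) (sC : kfunctor C C) (sD : kfunctor D D) :
  fully_faithful F ->
  nat_iso_commute F sC sD ->
  forall n m : nat, (1 <= n)%N ->
    (fpdim R n (fpow_obj sC m) <= fpdim R n (fpow_obj sD m))%E.
Proof.
move=> F_ff F_comm n m n_gt0; apply: (fpdim_le (G := fobj F)) => //.
  by move=> X X_brick i j; rewrite /= (hdim_fully_faithful R F_ff).
move=> X _; apply/matrixP => i j; rewrite !mxE /= -(hdim_fully_faithful R F_ff).
exact: hdim_kisor (kiso_fpow_obj F_comm m (X j)).
Qed.
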